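(* Let $z$ with $d(z,\mathcal{M})=O(\sigma)$, projection $z^*$, and $\Delta=\|z-z^*\|_2$. Choose Cartesian coordinates in which $z^*$ is the origin, $T_{z^*}\mathcal{M}$ is spanned by the first $d$ coordinate directions, and $z=(0,\dots,0,\Delta,0,\dots,0)$ with $\Delta$ in the $(d+1)$-th coordinate. Let $r_0=C\sigma$ and write $\mu_z^{\mathbb{B}}=\mathbb{E}_{Y\sim\nu}(Y\mid Y\in\mathcal{B}_D(z,r_0))=(\mu^{(1)},\dots,\mu^{(D)})$. If $|\Delta-\mu^{(d+1)}|\ge c_1\sigma$ and $|\mu^{(i)}|\le c_2\sigma^2\sqrt{\log(1/\sigma)}$ for all $i\ne d+1$, then $\sin\{\Theta(\mu_z^{\mathbb{B}}-z,\ z^*-z)\}\le C\sigma\sqrt{\log(1/\sigma)}$, where $\Theta(a,b)$ is the angle between vectors $a,b$.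
   Context: Model: $\mathcal{M}\subset\mathbb{R}^D$ is a compact, twice-differentiable, $d$-dimensional embedded submanifold with $d$-dimensional Hausdorff volume at most $V$ and reach at least $\tau>0$. $X$ is uniform on $\mathcal{M}$, $\xi\sim N(0,\sigma^2I_D)$ independent, and $Y=X+\xi$ has density $\nu$. $z^*=\arg\min_{x\in\mathcal{M}}\|x-z\|_2$. $\sigma$ is sufficiently small; $c_1,c_2,C$ are constants independent of $\sigma$. *)

From mathcomp Require Import all_boot all_order all_algebra.
From mathcomp Require Import reals exp.
Set Implicit Arguments. Unset Strict Implicit. Unset Printing Implicit Defensive.
Import Order.TTheory GRing.Theory Num.Theory.
Local Open Scope ring_scope.

Definition dotv (R : realType) (D : nat) (u v : 'rV[R]_D) : R :=
  \sum_(i < D) u 0 i * v 0 i.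
Definition normv (R : realType) (D : nat) (u : 'rV[R]_D) : R :=
  Num.sqrt (dotv u u).

(* sin of the angle Theta(a,b) between a and b:
   sin Theta = sqrt(|a|^2|b|^2 - <a,b>^2) / (|a| |b|)  (0 if a or b is 0). *)
Definition sin_angle (R : realType) (D : nat) (a b : 'rV[R]_D) : R :=
  Num.sqrt (dotv a a * dotv b b - (dotv a b) ^+ 2) / (normv a * normv b).

From mathcomp Require Import all_boot all_order all_algebra.
From mathcomp Require Import reals exp.
From mathcomp Require Import ring.
Import Order.TTheory GRing.Theory Num.Theory.
Local Open Scope ring_scope.

(* Measured against the axis of [z* - z], the sine of the angle is the ratio of
   the off-axis part of [mu - z] to its full length.  The off-axis coordinates
   are [O(sigma^2 sqrt(log(1/sigma)))], while the on-axis coordinate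
   [mu^(d+1) - Delta] is at least [c1 sigma]; dividing gives the bound. *)

Section AxisAngle.
Variables (R : realType) (D : nat).
Implicit Types (a : 'rV[R]_D) (i : 'I_D) (c B m : R).

Definition offaxis_sqnorm i a : R := \sum_(j < D | j != i) a 0 j ^+ 2.

Lemma offaxis_sqnorm_ge0 i a : 0 <= offaxis_sqnorm i a.
Proof. by apply: sumr_ge0 => j _; exact: sqr_ge0. Qed.

Lemma dotvv_axis i a : dotv a a = a 0 i ^+ 2 + offaxis_sqnorm i a.
Proof. by rewrite /dotv (bigD1 i) //= -expr2; under eq_bigr do rewrite -expr2. Qed.

Lemma dotv_axis i a c : dotv a (c *: delta_mx 0 i) = c * a 0 i.
Proof.
rewrite /dotv (bigD1 i) //= big1 => [|j /negPf ji]; last by rewrite !mxE ji mulr0 mulr0.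
by rewrite !mxE !eqxx mulr1 addr0 mulrC.
Qed.

Lemma dotv_axis_axis i c : dotv (c *: delta_mx 0 i) (c *: delta_mx 0 i) = c ^+ 2.
Proof. by rewrite dotv_axis !mxE !eqxx mulr1 expr2. Qed.

Lemma normv_ge_coord i a : `|a 0 i| <= normv a.
Proof.
rewrite /normv -sqrtr_sqr ler_sqrt ?(dotvv_axis i) ?addr_ge0 ?sqr_ge0 ?offaxis_sqnorm_ge0 //.
by rewrite lerDl offaxis_sqnorm_ge0.
Qed.

Lemma sin_angle0r a : sin_angle a 0 = 0.
Proof.
have dot00 : dotv (0 : 'rV[R]_D) 0 = 0 by rewrite /dotv big1 // => j _; rewrite mxE mulr0.
by rewrite /sin_angle [normv 0]/normv dot00 sqrtr0 [normv a * 0]mulr0 invr0 mulr0.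
Qed.

Lemma sin_angle_axis i a c : c != 0 ->
  sin_angle a (c *: delta_mx 0 i) = Num.sqrt (offaxis_sqnorm i a) / normv a.
Proof.
move=> c0; rewrite /sin_angle [normv (_ *: _)]/normv !dotv_axis_axis dotv_axis (dotvv_axis i).
have -> : (a 0 i ^+ 2 + offaxis_sqnorm i a) * c ^+ 2 - (c * a 0 i) ^+ 2
          = c ^+ 2 * offaxis_sqnorm i a by ring.
rewrite sqrtrM ?sqr_ge0 // sqrtr_sqr [normv a * _]mulrC -mulf_div divff ?mul1r //.
by rewrite normr_eq0.
Qed.

Lemma offaxis_sqnorm_le i a B : 0 <= B -> (forall j, j != i -> `|a 0 j| <= B) ->
  Num.sqrt (offaxis_sqnorm i a) <= Num.sqrt D%:R * B.
Proof.
move=> B0 aB; rewrite -(ger0_norm B0) -sqrtr_sqr -sqrtrM ?ler0n // ler_sqrt; last first.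
  by rewrite mulr_ge0 ?ler0n ?sqr_ge0.
apply: (@le_trans _ _ (\sum_(j < D) B ^+ 2)); last first.
  by rewrite sumr_const card_ord mulr_natl.
rewrite [leRHS](bigD1 i) //= -[X in X <= _]add0r lerD ?sqr_ge0 //.
by apply: ler_sum => j /aB aj; rewrite -real_normK ?num_real // ler_sqr ?nnegrE ?normr_ge0.
Qed.

Lemma sin_angle_axis_le i a c B m : 0 < m -> m <= `|a 0 i| ->
  0 <= B -> (forall j, j != i -> `|a 0 j| <= B) ->
  sin_angle a (c *: delta_mx 0 i) <= Num.sqrt D%:R * B / m.
Proof.
move=> m0 ma B0 aB; have [->|c0] := eqVneq c 0.
  by rewrite scale0r sin_angle0r divr_ge0 ?mulr_ge0 ?sqrtr_ge0 // ltW.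
have ma' : m <= normv a := le_trans ma (normv_ge_coord i a).
rewrite sin_angle_axis //; apply: (@le_trans _ _ (Num.sqrt (offaxis_sqnorm i a) / m)).
  by rewrite ler_wpM2l ?sqrtr_ge0 // lef_pV2 ?posrE // (lt_le_trans m0).
by rewrite ler_wpM2r ?invr_ge0 ?(ltW m0) //; exact: offaxis_sqnorm_le.
Qed.

End AxisAngle.

Theorem proposition3p2 (R : realType) (D d : nat) (hd : (d < D)%N)
  (K c1 c2 : R) : 0 < K -> 0 < c1 -> 0 < c2 ->
  exists C : R, 0 < C /\ exists sigma0 : R, 0 < sigma0 /\
  forall (sigma Delta : R) (mu : 'rV[R]_D),
    0 < sigma -> sigma < sigma0 ->
    0 <= Delta -> Delta <= K * sigma ->
    let i0 : 'I_D := Ordinal hd in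
    let z : 'rV[R]_D := Delta *: delta_mx 0 i0 in
    let zstar : 'rV[R]_D := 0 in
    c1 * sigma <= `|Delta - mu 0 i0| ->
    (forall i : 'I_D, i != i0 ->
       `|mu 0 i| <= c2 * sigma ^+ 2 * Num.sqrt (ln (sigma^-1))) ->
    sin_angle (mu - z) (zstar - z) <= C * sigma * Num.sqrt (ln (sigma^-1)).
Proof.
move=> _ c1_gt0 c2_gt0.
have sqrtD_gt0 : 0 < Num.sqrt D%:R :> R by rewrite sqrtr_gt0 ltr0n (leq_ltn_trans _ hd).
exists (Num.sqrt D%:R * c2 / c1); split; first by rewrite !mulr_gt0 ?invr_gt0.
exists 1; split => // sigma Delta mu sigma_gt0 _ _ _ i0 z zstar on_axis off_axis.
set L := Num.sqrt _ in off_axis *.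
have -> : zstar - z = (- Delta) *: delta_mx 0 i0 by rewrite sub0r scaleNr.
have -> : Num.sqrt D%:R * c2 / c1 * sigma * L
          = Num.sqrt D%:R * (c2 * sigma ^+ 2 * L) / (c1 * sigma).
  by field; rewrite !gt_eqF.
apply: sin_angle_axis_le.
- by rewrite mulr_gt0.
- by rewrite !mxE !eqxx mulr1 distrC.
- by rewrite !mulr_ge0 ?sqr_ge0 ?sqrtr_ge0 ?ltW.
- by move=> j ji; rewrite !mxE (negPf ji) andbF mulr0 subr0; exact: off_axis.
Qed.
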